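(* Let $Q$ be the rate matrix of an irreducible BD process on $\mathcal{M}=\{0,1\}^k$ that is reversible with respect to its limiting distribution $\pi$, with $\pi(m)>0$ for all $m$. Let $(\varepsilon_s)_{s\ge1}$ be a sequence with $\varepsilon_s>0$ and $\varepsilon_s q_i(m)\le 1$ for all $s,i,m$, satisfying $$\lim_{s\to\infty}\varepsilon_s=0\quad\text{and}\quad\sum_{s=1}^\infty\varepsilon_s=\infty.$$ Consider the time-inhomogeneous Markov chain on $\mathcal{M}$ whose transition matrix at iteration $s$ is $P_{\varepsilon_s}$ (defined below), with arbitrary initial distribution $\mu_0$, and let $\mu_s=\mu_0P_{\varepsilon_1}P_{\varepsilon_2}\cdots P_{\varepsilon_s}$ be its distribution after $s$ iterations. Then for every vector norm $\|\cdot\|$ on $\mathbb{R}^l$, $$\lim_{s\to\infty}\|\mu_s-\pi\|=0.$$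
   Context: $\mathcal{M}=\{0,1\}^k$, $l=2^k$; for $m\in\mathcal{M}$, $m^i$ is $m$ with coordinate $i$ flipped. The BD process is the continuous-time Markov chain with rate matrix $Q(m,m^i)=q_i(m)\ge0$, $Q(m,m)=-\sum_{i=1}^k q_i(m)$, $Q(m,m')=0$ otherwise. Reversibility: $\pi(m)Q(m,m')=\pi(m')Q(m',m)$ for all $m,m'$. For models $m,m'$, $H_{m,m'}$ is the set of coordinates where they differ, and for $\varepsilon>0$ $$P_\varepsilon(m,m')=\prod_{i\in H_{m,m'}} \varepsilon\, q_i(m)\prod_{i\notin H_{m,m'}}\bigl(1-\varepsilon\, q_i(m)\bigr),$$ i.e. from state $m$ each coordinate $i$ is flipped independently with probability $\varepsilon q_i(m)$. Distributions are row vectors in $\mathbb{R}^l$. *)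

From HB Require Import structures.
From mathcomp Require Import all_boot all_order all_algebra.
From mathcomp Require Import all_classical all_reals all_analysis.
Set Implicit Arguments. Unset Strict Implicit. Unset Printing Implicit Defensive.
Import Order.TTheory GRing.Theory Num.Theory.
Local Open Scope ring_scope.

(* The model space M = {0,1}^k, as boolean functions on 'I_k; #|M| = 2^k = l. *)
Definition model (k : nat) := {ffun 'I_k -> bool}.

Definition flip (k : nat) (m : model k) (i : 'I_k) : model k :=
  [ffun j => if j == i then ~~ m j else m j].

Section BD.
Variables (R : realType) (k : nat) (q : 'I_k -> model k -> R).

Definition rateQ (m m' : model k) : R :=
  if m' == m then - \sum_(i < k) q i m
  else \sum_(i < k) (if m' == flip m i then q i m else 0).

Definition bd_edge : rel (model k) :=
  fun m m' => [exists i : 'I_k, (m' == flip m i) && (0 < q i m)].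
Definition irreducible := forall m m' : model k, connect bd_edge m m'.

Definition is_distribution (mu : {ffun model k -> R}) :=
  (forall m, 0 <= mu m) /\ \sum_m mu m = 1.

(* stationary (= limiting, for an irreducible finite chain) distribution *)
Definition stationary (pi : {ffun model k -> R}) :=
  is_distribution pi /\ forall m', \sum_m pi m * rateQ m m' = 0.

Definition reversible (pi : {ffun model k -> R}) :=
  forall m m', pi m * rateQ m m' = pi m' * rateQ m' m.

Definition Peps (eps : R) (m m' : model k) : R :=
  \prod_(i < k) (if m i != m' i then eps * q i m else 1 - eps * q i m).

Definition step (eps : R) (mu : {ffun model k -> R}) : {ffun model k -> R} :=
  [ffun m' => \sum_m mu m * Peps eps m m'].

Fixpoint mu_iter (eps : nat -> R) (mu0 : {ffun model k -> R}) (s : nat)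
  : {ffun model k -> R} :=
  match s with
  | 0 => mu0
  | s'.+1 => step (eps s'.+1) (mu_iter eps mu0 s')
  end.
End BD.

Definition is_norm (R : realType) (V : lmodType R) (N : V -> R) :=
  [/\ forall x, N x = 0 -> x = 0,
      forall (a : R) x, N (a *: x) = `|a| * N x
    & forall x y, N (x + y) <= N x + N y].

From HB Require Import structures.
From mathcomp Require Import all_boot all_order all_algebra.
From mathcomp Require Import all_classical all_reals all_analysis.
From mathcomp Require Import ring lra.
Set Implicit Arguments. Unset Strict Implicit. Unset Printing Implicit Defensive.
Import Order.TTheory GRing.Theory Num.Theory numFieldNormedType.Exports.
Local Open Scope classical_set_scope.
Local Open Scope ring_scope.

(* Measure the distance to [pi] by V(mu) = sum_m (mu m - pi m)^2 / pi m.  Reversibility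
   makes Q self-adjoint for this inner product, and irreducibility yields a spectral gap
   <x, xQ> <= - g |x|^2 on vectors of total mass 0 (a Poincare inequality, obtained by
   chaining the Dirichlet form along paths of positive rates).  Since
   P_eps = I + eps Q + O(eps^2) entrywise, one step of the chain gives
   V(mu P_eps) <= (1 - g eps / 2) V(mu) + K eps^3 once eps is small.  With eps_s -> 0 and
   sum_s eps_s = +oo this recursion forces V(mu_s) -> 0, and on the finite-dimensional
   space every norm is dominated by sqrt V. *)

Section FiniteSums.
Variable R : realType.

Lemma prod1B_bounds (I : Type) (r : seq I) (P : pred I) (a : I -> R) :
  (forall i, 0 <= a i <= 1) ->
  1 - \sum_(i <- r | P i) a i <= \prod_(i <- r | P i) (1 - a i)
    <= 1 - \sum_(i <- r | P i) a i + (\sum_(i <- r | P i) a i) ^+ 2.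
Proof.
move=> a01; elim: r => [|x r IH]; first by rewrite !big_nil subr0 expr0n /= addr0 lexx.
rewrite !big_cons; case: (P x) => //.
have /andP[ax0 ax1] := a01 x.
have s0 : 0 <= \sum_(i <- r | P i) a i by rewrite sumr_ge0 // => i _; case/andP: (a01 i).
move: IH s0; set p := \prod_(_ <- _ | _) _; set s := \sum_(_ <- _ | _) _.
move=> /andP[lo hi] s0; have as2_ge0 := mulr_ge0 (mulr_ge0 ax0 s0) s0.
apply/andP; split; nra.
Qed.

Lemma sqr_sum_le (T : finType) (x : T -> R) :
  (\sum_i x i) ^+ 2 <= #|T|%:R * \sum_i x i ^+ 2.
Proof.
have sum_const (c : R) : \sum_(j : T) c = #|T|%:R * c.
  by rewrite sumr_const mulr_natl.
rewrite expr2 mulr_suml.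
apply: (@le_trans _ _ (\sum_i \sum_(j : T) (x i ^+ 2 + x j ^+ 2) / 2)).
  apply: ler_sum => i _; rewrite mulr_sumr; apply: ler_sum => j _.
  have := sqr_ge0 (x i - x j); nra.
under eq_bigr => i _ do rewrite -mulr_suml big_split /= sum_const.
rewrite -mulr_suml big_split /= sum_const -mulr_sumr; lra.
Qed.

End FiniteSums.

Section WeightedL2.
Variables (R : realType) (T : finType).
Implicit Types (x y p mu : {ffun T -> R}) (A : T -> T -> R).

Definition wdot (pi : T -> R) x y := \sum_m x m * y m / pi m.

Definition vmul x A : {ffun T -> R} := [ffun m' => \sum_m x m * A m m'].

Lemma vmul_perturb x p A P (e : R) : vmul p A = 0 ->
  vmul x P - p
    = (x - p) + e *: vmul (x - p) A + vmul x (fun m m' => P m m' - (m == m')%:R - e * A m m').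
Proof.
move=> pA0; apply/ffunP => m'; have /ffunP/(_ m') := pA0; rewrite !ffunE => pA.
have diag : \sum_m x m * (m == m')%:R = x m'.
  rewrite (bigD1 m') //= eqxx mulr1 big1 ?addr0 // => m /negbTE ->; exact: mulr0.
have err : \sum_m x m * (P m m' - (m == m')%:R - e * A m m')
    = \sum_m x m * P m m' - x m' - e * \sum_m x m * A m m'.
  by rewrite -diag mulr_sumr -!sumrB; apply: eq_bigr => m _; ring.
have centred : \sum_m (x - p) m * A m m' = \sum_m x m * A m m'.
  by under eq_bigr do rewrite !ffunE mulrBl; rewrite sumrB pA subr0.
by rewrite err centred -[e *: _]/(e * _); ring.
Qed.

Variable pi : T -> R.
Hypothesis pi_gt0 : forall m, 0 < pi m.

Lemma wdot_ge0 x : 0 <= wdot pi x x.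
Proof. by rewrite sumr_ge0 // => m _; rewrite -expr2 mulr_ge0 ?sqr_ge0 ?invr_ge0 ?ltW. Qed.

Lemma wdot_addZ x y (c : R) :
  wdot pi (x + c *: y) (x + c *: y) = wdot pi x x + 2 * c * wdot pi x y + c ^+ 2 * wdot pi y y.
Proof.
rewrite /wdot !mulr_sumr -!big_split; apply: eq_bigr => m _ /=.
by rewrite !ffunE -[c *: y m]/(c * y m); ring.
Qed.

Lemma wdotD_le x y (e : R) : 0 < e ->
  wdot pi (x + y) (x + y) <= (1 + e) * wdot pi x x + (1 + e^-1) * wdot pi y y.
Proof.
move=> e_gt0; rewrite /wdot !mulr_sumr -big_split /=; apply: ler_sum => m _.
have ipi : 0 < (pi m)^-1 by rewrite invr_gt0.
rewrite ffunE; set u := x m; set v := y m.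
have : (u + v) ^+ 2 <= (1 + e) * u ^+ 2 + (1 + e^-1) * v ^+ 2.
  have -> : (1 + e) * u ^+ 2 + (1 + e^-1) * v ^+ 2 = (u + v) ^+ 2 + e^-1 * (e * u - v) ^+ 2.
    by field; rewrite gt_eqF.
  by rewrite lerDl mulr_ge0 ?sqr_ge0 ?invr_ge0 ?ltW.
by move/(ler_wpM2r (ltW ipi)); rewrite mulrDl !expr2 !mulrA.
Qed.

Lemma wdot_le_sup y (b : R) :
  (forall m, y m ^+ 2 <= b) -> wdot pi y y <= b * \sum_m (pi m)^-1.
Proof.
move=> yb; rewrite mulr_sumr; apply: ler_sum => m _.
by rewrite -expr2 ler_pM2r ?invr_gt0.
Qed.

Lemma wdot_vmul_distr_le mu A (a : R) :
  (forall m, 0 <= mu m) -> \sum_m mu m = 1 -> (forall m m', `|A m m'| <= a) ->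
  wdot pi (vmul mu A) (vmul mu A) <= a ^+ 2 * \sum_m (pi m)^-1.
Proof.
move=> mu_ge0 mu_sum1 Aa; apply: wdot_le_sup => m'.
have a_ge0 : 0 <= a by apply: le_trans (Aa m' m').
rewrite -real_normK ?num_real // lerXn2r ?nnegrE //.
rewrite ffunE -[a]mul1r -mu_sum1 mulr_suml; apply: le_trans (ler_norm_sum _ _ _) _.
by apply: ler_sum => m _; rewrite normrM ger0_norm // ler_wpM2l.
Qed.

Hypothesis pi_le1 : forall m, pi m <= 1.

Lemma sum_sqr_le_wdot x : \sum_m x m ^+ 2 <= wdot pi x x.
Proof.
apply: ler_sum => m _; rewrite -expr2 ler_peMr ?sqr_ge0 //.
by rewrite invr_ge1 ?unitfE ?gt_eqF.
Qed.

Lemma sqr_le_wdot x m : x m ^+ 2 <= wdot pi x x.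
Proof.
apply: le_trans (sum_sqr_le_wdot x); rewrite (bigD1 m) //= lerDl.
by rewrite sumr_ge0 // => ? _; apply: sqr_ge0.
Qed.

Lemma wdot_vmul_le x A (a : R) : (forall m m', `|A m m'| <= a) ->
  wdot pi (vmul x A) (vmul x A)
    <= a ^+ 2 * (#|T|%:R * \sum_m (pi m)^-1) * wdot pi x x.
Proof.
move=> Aa.
have -> : a ^+ 2 * (#|T|%:R * \sum_m (pi m)^-1) * wdot pi x x
        = a ^+ 2 * #|T|%:R * wdot pi x x * \sum_m (pi m)^-1 by ring.
apply: wdot_le_sup => m'.
have a_ge0 : 0 <= a by apply: le_trans (Aa m' m').
have sum_abs : `|vmul x A m'| <= a * \sum_m `|x m|.
  rewrite ffunE mulr_sumr; apply: le_trans (ler_norm_sum _ _ _) _.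
  by apply: ler_sum => m _; rewrite normrM mulrC ler_wpM2r.
rewrite -real_normK ?num_real //.
apply: (@le_trans _ _ ((a * \sum_m `|x m|) ^+ 2)).
  by rewrite lerXn2r ?nnegrE ?mulr_ge0 ?sumr_ge0.
rewrite exprMn -mulrA; apply: ler_wpM2l; first exact: sqr_ge0.
apply: le_trans (sqr_sum_le _) _; apply: ler_wpM2l; first exact: ler0n.
under eq_bigr => m _ do rewrite (real_normK (num_real (x m))).
exact: sum_sqr_le_wdot.
Qed.

End WeightedL2.

Section SpectralGap.
Variables (R : realType) (T : finType) (Q : T -> T -> R) (pi : T -> R).
Hypotheses (Q_ge0 : forall m m', m != m' -> 0 <= Q m m')
           (Q_row0 : forall m, \sum_m' Q m m' = 0)
           (Q_rev : forall m m', pi m * Q m m' = pi m' * Q m' m)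
           (Q_irr : forall a b, connect [rel m m' | 0 < Q m m'] a b)
           (pi_gt0 : forall m, 0 < pi m)
           (pi_sum1 : \sum_m pi m = 1).
Implicit Types (f : T -> R) (x : {ffun T -> R}).

Definition dirichlet f := \sum_m \sum_m' pi m * Q m m' * (f m - f m') ^+ 2.

Lemma dirichlet_term_ge0 f a b : 0 <= pi a * Q a b * (f a - f b) ^+ 2.
Proof.
have [->|ab] := eqVneq a b; first by rewrite subrr expr0n /= mulr0.
by rewrite mulr_ge0 ?sqr_ge0 // mulr_ge0 ?Q_ge0 ?ltW.
Qed.

Lemma dirichlet_ge0 f : 0 <= dirichlet f.
Proof. by rewrite !sumr_ge0 // => a _; rewrite sumr_ge0 // => b _; apply: dirichlet_term_ge0. Qed.

Lemma dirichlet_term_le f a b : pi a * Q a b * (f a - f b) ^+ 2 <= dirichlet f.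
Proof.
rewrite /dirichlet (bigD1 a) //= (bigD1 b) //= -addrA lerDl.
rewrite addr_ge0 ?sumr_ge0 // => [m _|m _]; first exact: dirichlet_term_ge0.
by rewrite sumr_ge0 // => m' _; apply: dirichlet_term_ge0.
Qed.

Lemma sqr_sub_le_dirichlet_edge a b : 0 < Q a b ->
  exists2 c, 0 <= c & forall f, (f a - f b) ^+ 2 <= c * dirichlet f.
Proof.
move=> Qab; have w_gt0 : 0 < pi a * Q a b by rewrite mulr_gt0.
exists (pi a * Q a b)^-1 => [|f]; first by rewrite invr_ge0 ltW.
rewrite -[X in X <= _]mul1r -(mulVf (negbT (gt_eqF w_gt0))) -mulrA.
by rewrite ler_pM2l ?invr_gt0 // dirichlet_term_le.
Qed.

Lemma sqr_sub_le_dirichlet_connect a b : connect [rel m m' | 0 < Q m m'] a b ->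
  exists2 c, 0 <= c & forall f, (f a - f b) ^+ 2 <= c * dirichlet f.
Proof.
move=> /connectP[p path_p ->]; elim: p a path_p => [|z p IH] a /=.
  by move=> _; exists 0 => // f; rewrite subrr expr0n mul0r.
move=> /andP[Qaz path_zp]; have [c1 c1_ge0 bound1] := IH z path_zp.
have [c0 c0_ge0 bound0] := sqr_sub_le_dirichlet_edge Qaz.
exists (2 * c0 + 2 * c1) => [|f]; first by rewrite addr_ge0 ?mulr_ge0.
have := bound0 f; have := bound1 f; have := dirichlet_ge0 f.
set l := last z p; have := sqr_ge0 (f a - 2 * f z + f l); nra.
Qed.

Lemma sqr_sub_le_dirichlet :
  exists2 C, 0 < C & forall f a b, (f a - f b) ^+ 2 <= C * dirichlet f.
Proof.
have /fin_all_exists2[c c_ge0 bound] (ab : T * T) :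
    exists2 c, 0 <= c & forall f, (f ab.1 - f ab.2) ^+ 2 <= c * dirichlet f.
  exact: sqr_sub_le_dirichlet_connect.
exists (1 + \sum_ab c ab) => [|f a b]; first by rewrite ltr_wpDr ?sumr_ge0.
apply: le_trans (bound (a, b) f) _; rewrite ler_wpM2r ?dirichlet_ge0 //.
by rewrite (bigD1 (a, b)) //= addrCA lerDl addr_ge0 ?sumr_ge0.
Qed.

Lemma wdot_vmul_generator x :
  wdot pi x (vmul x Q) = - dirichlet (fun m => x m / pi m) / 2.
Proof.
set f := fun m => x m / pi m.
have xE m : x m = pi m * f m by rewrite /f mulrCA mulfV ?mulr1 ?gt_eqF.
have cross : wdot pi x (vmul x Q) = \sum_m \sum_m' pi m * Q m m' * (f m * f m').
  rewrite /wdot exchange_big /=; apply: eq_bigr => m' _.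
  rewrite ffunE mulrAC -/(f m') mulr_sumr; apply: eq_bigr => m _; rewrite xE; ring.
have diag_l : \sum_m \sum_m' pi m * Q m m' * f m ^+ 2 = 0.
  rewrite big1 // => m _; rewrite -mulr_suml -mulr_sumr Q_row0; ring.
have diag_r : \sum_m \sum_m' pi m * Q m m' * f m' ^+ 2 = 0.
  rewrite exchange_big big1 //= => m' _.
  under eq_bigr do rewrite Q_rev.
  by rewrite -mulr_suml -mulr_sumr Q_row0; ring.
have -> : dirichlet f = \sum_m \sum_m' pi m * Q m m' * f m ^+ 2
    + \sum_m \sum_m' pi m * Q m m' * f m' ^+ 2
    - 2 * \sum_m \sum_m' pi m * Q m m' * (f m * f m').
  rewrite mulr_sumr -big_split -sumrB; apply: eq_bigr => m _ /=.
  rewrite mulr_sumr -big_split -sumrB; apply: eq_bigr => m' _ /=; ring.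
by rewrite diag_l diag_r cross; field.
Qed.

Lemma sum_sqr_sub_weighted f :
  \sum_a \sum_b pi a * pi b * (f a - f b) ^+ 2
    = 2 * \sum_a pi a * f a ^+ 2 - 2 * (\sum_a pi a * f a) ^+ 2.
Proof.
have -> : \sum_a \sum_b pi a * pi b * (f a - f b) ^+ 2
    = (\sum_a pi a * f a ^+ 2) * (\sum_b pi b) + (\sum_a pi a) * (\sum_b pi b * f b ^+ 2)
      - 2 * ((\sum_a pi a * f a) * (\sum_b pi b * f b)).
  rewrite !mulr_suml mulr_sumr -big_split -sumrB; apply: eq_bigr => a _ /=.
  rewrite !mulr_sumr -big_split -sumrB; apply: eq_bigr => b _ /=; ring.
by rewrite pi_sum1; ring.
Qed.

Lemma spectral_gap : exists2 g, 0 < g &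
  forall x, \sum_m x m = 0 -> wdot pi x (vmul x Q) <= - g * wdot pi x x.
Proof.
have [C C_gt0 boundC] := sqr_sub_le_dirichlet.
exists C^-1 => [|x x_sum0]; first by rewrite invr_gt0.
set f := fun m => x m / pi m.
have xE m : x m = pi m * f m by rewrite /f mulrCA mulfV ?mulr1 ?gt_eqF.
have norm_f : wdot pi x x = \sum_m pi m * f m ^+ 2.
  by apply: eq_bigr => m _; rewrite !xE /f; field; rewrite gt_eqF.
have mean_f : \sum_m pi m * f m = 0 by rewrite -[RHS]x_sum0; apply: eq_bigr => m _; rewrite xE.
have var_le : 2 * wdot pi x x <= C * dirichlet f.
  have -> : 2 * wdot pi x x = \sum_a \sum_b pi a * pi b * (f a - f b) ^+ 2.
    by rewrite sum_sqr_sub_weighted mean_f expr0n /= mulr0 subr0 norm_f.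
  apply: (@le_trans _ _ (\sum_a \sum_(b : T) pi a * pi b * (C * dirichlet f))).
    by do 2!apply: ler_sum => ? _; apply: ler_wpM2l => //; rewrite mulr_ge0 ?ltW.
  by under eq_bigr do rewrite -mulr_suml -mulr_sumr pi_sum1 mulr1; rewrite -mulr_suml pi_sum1 mul1r.
have Ci_ge0 : 0 <= C^-1 by rewrite invr_ge0 ltW.
have := ler_wpM2l Ci_ge0 var_le.
by rewrite wdot_vmul_generator -/f [C^-1 * (C * _)]mulrA mulVf ?gt_eqF // mul1r; lra.
Qed.

End SpectralGap.

Lemma contraction_arith (R : realType) (g e C B V a b : R) :
  0 < g -> 0 < e <= 1 -> 0 <= C -> 0 <= B -> 0 <= V -> C * (1 + g) * e <= g / 2 ->
  a <= (1 - 2 * g * e + C * e ^+ 2) * V -> b <= B * e ^+ 4 ->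
  (1 + g * e) * a + (1 + (g * e)^-1) * b
    <= (1 - g / 2 * e) * V + B * (1 + g^-1) * e ^+ 3.
Proof.
move=> g_gt0 /andP[e_gt0 e_le1] C_ge0 B_ge0 V_ge0 small ha hb.
have ge_gt0 : 0 < g * e by rewrite mulr_gt0.
have factor_le : (1 + g * e) * (1 - 2 * g * e + C * e ^+ 2) <= 1 - g / 2 * e.
  have h1 := ler_wpM2l (ltW e_gt0) small.
  have h2 : g * C * e ^+ 3 <= g * C * e ^+ 2.
    apply: ler_wpM2l; first exact: mulr_ge0 (ltW g_gt0) C_ge0.
    by rewrite exprS; apply: ler_piMl => //; rewrite exprn_ge0 ?ltW.
  have h3 : 0 <= (g * e) ^+ 2 := sqr_ge0 _.
  rewrite !exprS expr0 in h2 h3 *; lra.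
have part_a : (1 + g * e) * a <= (1 - g / 2 * e) * V.
  apply: le_trans (ler_wpM2l _ ha) _; first by rewrite addr_ge0 ?ltW.
  by rewrite mulrA ler_wpM2r.
have part_b : (1 + (g * e)^-1) * b <= B * (1 + g^-1) * e ^+ 3.
  apply: le_trans (ler_wpM2l _ hb) _; first by rewrite addr_ge0 ?invr_ge0 ?ltW.
  have -> : (1 + (g * e)^-1) * (B * e ^+ 4) = B * e * e ^+ 3 + B * g^-1 * e ^+ 3.
    by field; rewrite !gt_eqF.
  have e3_ge0 : 0 <= e ^+ 3 by rewrite exprn_ge0 ?ltW.
  have := ler_wpM2r e3_ge0 (ler_piMr B_ge0 e_le1); lra.
exact: lerD.
Qed.

Section Contraction.
Variables (R : realType) (T : finType) (Q : T -> T -> R) (pi : {ffun T -> R}) (g qs : R).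
Hypotheses (pi_gt0 : forall m, 0 < pi m) (pi_sum1 : \sum_m pi m = 1) (g_gt0 : 0 < g)
           (Q_gap : forall x : {ffun T -> R}, \sum_m x m = 0 ->
              wdot pi x (vmul x Q) <= - g * wdot pi x x)
           (Q_le : forall m m', `|Q m m'| <= qs) (piQ0 : vmul pi Q = 0).

Lemma pi_le1 m : pi m <= 1.
Proof. by rewrite -pi_sum1 (bigD1 m) //= lerDl sumr_ge0 // => ? _; apply: ltW. Qed.

Lemma wdot_step_le (mu : {ffun T -> R}) (P : T -> T -> R) (e : R) :
  (forall m, 0 <= mu m) -> \sum_m mu m = 1 -> 0 < e <= 1 ->
  qs ^+ 2 * (#|T|%:R * \sum_m (pi m)^-1) * (1 + g) * e <= g / 2 ->
  (forall m m', `|P m m' - (m == m')%:R - e * Q m m'| <= (e * qs) ^+ 2) ->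
  wdot pi (vmul mu P - pi) (vmul mu P - pi)
    <= (1 - g / 2 * e) * wdot pi (mu - pi) (mu - pi)
       + qs ^+ 4 * (\sum_m (pi m)^-1) * (1 + g^-1) * e ^+ 3.
Proof.
move=> mu_ge0 mu_sum1 /andP[e_gt0 e_le1] small P_err.
(* [pi] is stationary for [Q] but not for [P]; the error [P - 1 - e Q] therefore acts on
   [mu] itself rather than on [mu - pi], and this is what costs the [e ^+ 3] term. *)
rewrite (vmul_perturb mu P e piQ0); set x := mu - pi.
apply: le_trans (wdotD_le pi_gt0 _ _ (mulr_gt0 g_gt0 e_gt0)) _.
have inv_ge0 : 0 <= \sum_m (pi m)^-1 by rewrite sumr_ge0 // => m _; rewrite invr_ge0 ltW.
apply: (contraction_arith (C := qs ^+ 2 * (#|T|%:R * \sum_m (pi m)^-1))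
                          (B := qs ^+ 4 * \sum_m (pi m)^-1)) => //.
- by rewrite e_gt0.
- by rewrite mulr_ge0 ?sqr_ge0 ?mulr_ge0 ?ler0n.
- by rewrite mulr_ge0 // exprn_even_ge0.
- exact: wdot_ge0.
- have x_sum0 : \sum_m x m = 0.
    by under eq_bigr do rewrite !ffunE; rewrite sumrB mu_sum1 pi_sum1 subrr.
  rewrite wdot_addZ //.
  have gap := ler_wpM2l (mulr_ge0 (ler0n R 2) (ltW e_gt0)) (Q_gap x_sum0).
  have := ler_wpM2l (sqr_ge0 e) (wdot_vmul_le pi_gt0 pi_le1 x Q_le).
  have := wdot_ge0 pi_gt0 x; lra.
- apply: le_trans (wdot_vmul_distr_le pi_gt0 mu_ge0 mu_sum1 P_err) _.
  have -> : (e * qs) ^+ 2 ^+ 2 = qs ^+ 4 * e ^+ 4 by ring.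
  by rewrite mulrAC.
Qed.

End Contraction.

Section RecursiveInequality.
Variables (R : realType) (V ep : nat -> R).
Hypotheses (V_ge0 : forall s, 0 <= V s)
           (ep_sum : (fun n => \sum_(1 <= s < n.+1) ep s) @ \oo --> +oo).

Lemma divergent_descent_absurd (a : R) (S : nat) : 0 < a ->
  ~ (forall s, (S <= s)%N -> V s.+1 <= V s - a * ep s.+1).
Proof.
move=> a_gt0 descent; pose T n := \sum_(1 <= s < n.+1) ep s.
have drop n : V (S + n)%N <= V S - a * (T (S + n)%N - T S).
  elim: n => [|n IH]; first by rewrite addn0 subrr mulr0 subr0.
  have recT : T (S + n).+1 = T (S + n)%N + ep (S + n).+1 by rewrite /T big_nat_recr.
  have := descent _ (leq_addr n S); rewrite addnS recT; lra.
have [N _ T_ge] := (cvgryPge _).1 ep_sum (T S + V S / a + 1).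
have := T_ge (S + N)%N (leq_addl _ _); have := drop N; have := V_ge0 (S + N)%N.
rewrite -/(T _); have : a * (V S / a) = V S by field; rewrite gt_eqF.
nra.
Qed.

Lemma relaxation_eventually_le (c d : R) (S : nat) :
  0 < c -> 0 < d -> (forall s, 0 <= ep s.+1) ->
  (forall s, (S <= s)%N ->
     c * ep s.+1 <= 1 /\ V s.+1 <= (1 - c * ep s.+1) * V s + c * ep s.+1 * (d / 2)) ->
  \forall t \near \oo, V t <= d.
Proof.
move=> c_gt0 d_gt0 ep_ge0 rec_S.
have ce_ge0 s : 0 <= c * ep s.+1 := mulr_ge0 (ltW c_gt0) (ep_ge0 s).
have stay s : (S <= s)%N -> V s <= d -> V s.+1 <= d.
  move=> Ss Vs_le; have [ce_le1 rec] := rec_S s Ss; have := ce_ge0 s.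
  have : 0 <= (1 - c * ep s.+1) * (d - V s) by rewrite mulr_ge0 ?subr_ge0.
  nra.
have [s0 S_s0 Vs0] : exists2 s0, (S <= s0)%N & V s0 <= d.
  apply: contrapT => none.
  apply: (@divergent_descent_absurd (c * d / 2) S) => [|s Ss].
    by rewrite divr_gt0 ?mulr_gt0.
  have [_ rec] := rec_S s Ss.
  have Vs_ge : d <= V s.
    by rewrite leNgt; apply/negP => Vs_lt; apply: none; exists s => //; exact: ltW.
  have : 0 <= c * ep s.+1 * (V s - d) by rewrite mulr_ge0 ?ce_ge0 ?subr_ge0.
  nra.
exists s0 => // t s0_t; rewrite -(subnKC s0_t).
elim: (t - s0)%N => [|n IH]; first by rewrite addn0.
by rewrite addnS stay // (leq_trans S_s0) ?leq_addr.
Qed.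

Lemma recursive_ineq_cvg0 (c K : R) : 0 < c -> 0 <= K -> (forall s, 0 <= ep s.+1) ->
  ep @ \oo --> 0 ->
  (\forall s \near \oo, V s.+1 <= (1 - c * ep s.+1) * V s + K * ep s.+1 ^+ 3) ->
  V @ \oo --> 0.
Proof.
move=> c_gt0 K_ge0 ep_ge0 ep_cvg0 rec_ev; apply/cvgrPdist_le => d d_gt0.
have epS : (fun s => ep s.+1) @ \oo --> 0 := cvg_comp _ _ (cvg_addnl 1) ep_cvg0.
have [S _ rec_S] : \forall s \near \oo,
    c * ep s.+1 <= 1 /\ V s.+1 <= (1 - c * ep s.+1) * V s + c * ep s.+1 * (d / 2).
  near=> s.
  have e_ge0 := ep_ge0 s.
  have e_le1 : ep s.+1 <= 1 by near: s; apply: cvgr_le epS _ _.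
  have ce_le1 : c * ep s.+1 <= 1.
    by rewrite -ler_pdivlMl //; near: s; apply: cvgr_le epS _ _; rewrite mulr1 invr_gt0.
  have Ke_le : (K + 1) * ep s.+1 <= c * d / 2.
    rewrite mulrC -ler_pdivlMr ?ltr_wpDl //; near: s; apply: cvgr_le epS _ _.
    by rewrite !divr_gt0 ?mulr_gt0 ?ltr_wpDl.
  have rec : V s.+1 <= (1 - c * ep s.+1) * V s + K * ep s.+1 ^+ 3 by near: s.
  split=> //; apply: le_trans rec _; set x := ep s.+1 in e_ge0 e_le1 Ke_le *.
  have Kx2 : K * x ^+ 2 <= c * d / 2.
    have one_x : 0 <= 1 - x by rewrite subr_ge0.
    by have := mulr_ge0 (mulr_ge0 K_ge0 e_ge0) one_x; rewrite expr2; nra.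
  by have := ler_wpM2l e_ge0 Kx2; rewrite lerD2l; lra.
apply: filterS (relaxation_eventually_le c_gt0 d_gt0 ep_ge0 rec_S) => t Vt_le.
by rewrite sub0r normrN ger0_norm.
Unshelve. all: by end_near.
Qed.

End RecursiveInequality.

Section Flip.
Variable k : nat.
Implicit Types (m : model k) (i j : 'I_k).

Lemma flipE m i j : flip m i j = (if j == i then ~~ m j else m j).
Proof. by rewrite ffunE. Qed.

Lemma flip_neq m i : flip m i != m.
Proof. by apply/eqP => /ffunP/(_ i); rewrite flipE eqxx; case: (m i). Qed.

Lemma flip_inj m i j : (flip m i == flip m j) = (i == j).
Proof.
apply/eqP/eqP => [/ffunP/(_ i)|-> //]; rewrite !flipE eqxx.
by case: eqP => // _; case: (m i).
Qed.

Lemma model_far m m' : m' != m -> (forall i, m' != flip m i) ->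
  exists i j, [/\ i != j, m i != m' i & m j != m' j].
Proof.
move=> m'_neq far.
have [i mi] : exists i, m i != m' i.
  apply/existsP; apply: contraR m'_neq => /existsPn same.
  by apply/eqP/ffunP => i; have := same i; rewrite negbK eq_sym => /eqP.
have [j mj] : exists j, m' j != flip m i j.
  apply/existsP; apply: contraR (far i) => /existsPn same.
  by apply/eqP/ffunP => j; have := same j; rewrite negbK => /eqP.
have ji : j != i.
  by apply: contraNneq mj => ->; rewrite flipE eqxx; move: mi; case: (m i); case: (m' i).
exists i, j; split => //; first by rewrite eq_sym.
by move: mj; rewrite flipE (negbTE ji) eq_sym.
Qed.

End Flip.

Section BirthDeathRates.
Variables (R : realType) (k : nat) (q : 'I_k -> model k -> R).
Hypothesis q_ge0 : forall i m, 0 <= q i m.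
Implicit Types (m : model k) (i : 'I_k).

Lemma rateQ_diag m : rateQ q m m = - \sum_i q i m.
Proof. by rewrite /rateQ eqxx. Qed.

Lemma rateQ_flip m i : rateQ q m (flip m i) = q i m.
Proof.
rewrite /rateQ (negbTE (flip_neq m i)) (bigD1 i) //= eqxx big1 ?addr0 // => j ji.
by rewrite flip_inj eq_sym (negbTE ji).
Qed.

Lemma rateQ_far m m' : m' != m -> (forall i, m' != flip m i) -> rateQ q m m' = 0.
Proof.
by move=> /negbTE m'_neq far; rewrite /rateQ m'_neq big1 // => i _; rewrite (negbTE (far i)).
Qed.

Lemma rateQ_ge0 m m' : m != m' -> 0 <= rateQ q m m'.
Proof. by rewrite eq_sym /rateQ => /negbTE ->; rewrite sumr_ge0 // => i _; case: ifP. Qed.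

Lemma rateQ_row0 m : \sum_m' rateQ q m m' = 0.
Proof.
rewrite (bigD1 m) //= rateQ_diag.
under eq_bigr => m' m'_neq do rewrite /rateQ (negbTE m'_neq).
have flips i : \sum_(m' | m' != m) (if m' == flip m i then q i m else 0) = q i m.
  rewrite (bigD1 (flip m i)) ?flip_neq //= eqxx big1 ?addr0 //.
  by move=> m' /andP[_ /negbTE ->].
by rewrite exchange_big /= (eq_bigr _ (fun i _ => flips i)) addNr.
Qed.

Lemma rateQ_le (qs : R) m m' : (forall m, \sum_i q i m <= qs) -> `|rateQ q m m'| <= qs.
Proof.
move=> row_le; have [<-|m'_neq] := eqVneq m m'.
  by rewrite rateQ_diag normrN ger0_norm ?sumr_ge0.
rewrite ger0_norm ?rateQ_ge0 //; apply: le_trans (row_le m).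
by rewrite /rateQ eq_sym (negbTE m'_neq); apply: ler_sum => i _; case: ifP.
Qed.

Lemma irreducible_connect : irreducible q ->
  forall a b, connect [rel m m' | 0 < rateQ q m m'] a b.
Proof.
move=> irr a b; apply: connect_sub (irr a b) => m m' /existsP[i /andP[/eqP-> qi]].
by apply: connect1; rewrite /= rateQ_flip.
Qed.

End BirthDeathRates.

Section TransitionMatrix.
Variables (R : realType) (k : nat) (q : 'I_k -> model k -> R) (eps : R).
Hypothesis eps_q01 : forall i m, 0 <= eps * q i m <= 1.
Implicit Types (m : model k) (i j : 'I_k).

Lemma Peps_ge0 m m' : 0 <= Peps q eps m m'.
Proof.
apply: prodr_ge0 => i _; have /andP[a_ge0 a_le1] := eps_q01 i m.
by case: ifP; rewrite // subr_ge0.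
Qed.

Lemma Peps_row1 m : \sum_m' Peps q eps m m' = 1.
Proof.
pose F i b := if m i != b then eps * q i m else 1 - eps * q i m.
transitivity (\prod_i \sum_b F i b); first by rewrite bigA_distr_bigA.
by rewrite big1 // => i _; rewrite big_bool /F; case: (m i) => /=; ring.
Qed.

Lemma Peps_diag m : Peps q eps m m = \prod_i (1 - eps * q i m).
Proof. by apply: eq_bigr => i _; rewrite eqxx. Qed.

Lemma Peps_flip m i :
  Peps q eps m (flip m i) = eps * q i m * \prod_(j | j != i) (1 - eps * q j m).
Proof.
rewrite /Peps (bigD1 i) //= flipE eqxx; case: (m i) => /=; congr (_ * _);
  by apply: eq_bigr => j ji; rewrite flipE (negbTE ji) eqxx.
Qed.

Lemma Peps_far_le m m' i j : i != j -> m i != m' i -> m j != m' j ->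
  Peps q eps m m' <= eps * q i m * (eps * q j m).
Proof.
move=> ij mi mj; rewrite /Peps (bigD1 i) //= (bigD1 j) /= ?(eq_sym j) // mi mj mulrA.
have a_ge0 l : 0 <= eps * q l m by case/andP: (eps_q01 l m).
apply: ler_piMr; first by rewrite mulr_ge0.
apply: prodr_ile1 => l _; have /andP[? ?] := eps_q01 l m.
by case: ifP => _; apply/andP; split; lra.
Qed.

Lemma Peps_err_le m m' :
  `|Peps q eps m m' - (m == m')%:R - eps * rateQ q m m'| <= (eps * \sum_i q i m) ^+ 2.
Proof.
have a01 i := eps_q01 i m.
have a_ge0 i : 0 <= eps * q i m by case/andP: (a01 i).
rewrite mulr_sumr; set S := \sum_i eps * q i m.
have S_ge0 : 0 <= S by rewrite sumr_ge0.
have a_le_S i : eps * q i m <= S by rewrite /S (bigD1 i) //= lerDl sumr_ge0.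
have [<-|m_neq] := eqVneq m m'; last rewrite -[false%:R]/(0 : R) subr0.
  rewrite Peps_diag rateQ_diag -[true%:R]/(1 : R) mulrN mulr_sumr -/S.
  set P := \prod_i _.
  have /andP[lo hi] := prod1B_bounds (index_enum 'I_k) xpredT a01.
  by rewrite -/S -/P in lo hi; rewrite ger0_norm; lra.
case: (pickP (fun i => m' == flip m i)) => [i /eqP->|far].
  rewrite Peps_flip rateQ_flip.
  set P := \prod_(j | j != i) _.
  have /andP[lo _] := prod1B_bounds (index_enum 'I_k) (fun j => j != i) a01.
  have P_le1 : P <= 1.
    by apply: prodr_ile1 => j _; have /andP[? ?] := a01 j; apply/andP; split; lra.
  have S'_le : \sum_(j | j != i) eps * q j m <= S.
    by rewrite [leRHS](bigD1 i) //= lerDr.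
  rewrite -/P in lo; move: lo S'_le; set S' := \sum_(j | _) _ => lo S'_le.
  have -> : eps * q i m * P - eps * q i m = - (eps * q i m * (1 - P)) by ring.
  rewrite normrN ger0_norm; last by rewrite mulr_ge0 ?subr_ge0.
  by rewrite expr2; apply: ler_pM; rewrite ?subr_ge0 //; lra.
have [|i [j [ij mi mj]]] := model_far (m := m) (m' := m') _ (fun i => negbT (far i)).
  by rewrite eq_sym.
rewrite rateQ_far ?(eq_sym m') // => [|l]; last exact: negbT (far l).
rewrite mulr0 subr0 ger0_norm ?Peps_ge0 // expr2.
by apply: le_trans (Peps_far_le ij mi mj) _; apply: ler_pM.
Qed.

End TransitionMatrix.

Lemma step_distribution (R : realType) (k : nat) (q : 'I_k -> model k -> R) (eps : R) mu :
  (forall i m, 0 <= q i m) -> 0 <= eps -> (forall i m, eps * q i m <= 1) ->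
  is_distribution mu -> is_distribution (step q eps mu).
Proof.
move=> q_ge0 eps_ge0 eps_q_le1 [mu_ge0 mu_sum1].
have eps_q01 i m : 0 <= eps * q i m <= 1 by rewrite eps_q_le1 andbT mulr_ge0.
split=> [m'|]; first by rewrite ffunE sumr_ge0 // => m _; rewrite mulr_ge0 ?Peps_ge0.
under eq_bigr do rewrite ffunE.
by rewrite exchange_big /=; under eq_bigr do rewrite -mulr_sumr Peps_row1 // mulr1.
Qed.

Lemma mu_iter_distribution (R : realType) (k : nat) (q : 'I_k -> model k -> R)
    (eps : nat -> R) mu0 :
  (forall i m, 0 <= q i m) -> (forall s, (1 <= s)%N -> 0 <= eps s) ->
  (forall s i m, (1 <= s)%N -> eps s * q i m <= 1) ->
  is_distribution mu0 -> forall s, is_distribution (mu_iter q eps mu0 s).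
Proof.
move=> q_ge0 eps_ge0 eps_q_le1 mu0_d; elim=> //= s.
by apply: step_distribution => // [|i m]; [exact: eps_ge0 | exact: eps_q_le1].
Qed.

Section NormBound.
Variables (R : realType) (T : finType) (N : {ffun T -> R} -> R).
Hypothesis N_norm : is_norm N.

Lemma is_norm_ge0 x : 0 <= N x.
Proof.
case: N_norm => _ NZ ND; have N0 : N 0 = 0 by rewrite -(scale0r 0) NZ normr0 mul0r.
by have := ND x (- x); rewrite -scaleN1r NZ normrN normr1 mul1r scaleN1r subrr N0; lra.
Qed.

Lemma is_norm_le_sum x : N x <= \sum_m `|x m| * N [ffun m' => (m' == m)%:R].
Proof.
case: N_norm => _ NZ ND.
have x_decomp : x = \sum_m x m *: [ffun m' => (m' == m)%:R : R].
  apply/ffunP => m'; rewrite sum_ffunE (bigD1 m') //= big1 => [|m m_neq].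
    by rewrite !ffunE eqxx addr0 -[_ *: _]/(_ * _) mulr1.
  by rewrite !ffunE eq_sym (negbTE m_neq) -[_ *: _]/(_ * _) mulr0.
rewrite {1}x_decomp; apply: (big_ind2 (fun v r => N v <= r)) => [|u a v b Nu Nv|m _].
- by rewrite -(scale0r 0) NZ normr0 mul0r.
- by apply: le_trans (ND _ _) _; apply: lerD.
- by rewrite NZ.
Qed.

Lemma is_norm_le_wdot (pi : T -> R) x : (forall m, 0 < pi m) -> (forall m, pi m <= 1) ->
  N x <= (\sum_m N [ffun m' => (m' == m)%:R]) * Num.sqrt (wdot pi x x).
Proof.
move=> pi_gt0 pi_le1; apply: le_trans (is_norm_le_sum x) _.
rewrite mulr_suml; apply: ler_sum => m _; rewrite mulrC ler_wpM2l ?is_norm_ge0 //.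
by rewrite -sqrtr_sqr ler_wsqrtr // sqr_le_wdot.
Qed.

Lemma is_norm_cvg0 (pi : T -> R) (I : Type) (F : set_system I) {FF : Filter F}
    (x : I -> {ffun T -> R}) :
  (forall m, 0 < pi m) -> (forall m, pi m <= 1) ->
  (fun i => wdot pi (x i) (x i)) @ F --> 0 -> (fun i => N (x i)) @ F --> 0.
Proof.
move=> pi_gt0 pi_le1 wdot_cvg0; set B := \sum_m N [ffun m' => (m' == m)%:R].
apply: (@squeeze_cvgr _ _ _ _ (cst 0) (fun i => B * Num.sqrt (wdot pi (x i) (x i))));
  last 2 first.
- exact: cvg_cst.
- rewrite -(mulr0 B) -sqrtr0; apply: cvgM; first exact: cvg_cst.
  by apply: (cvg_comp _ _ wdot_cvg0); apply: sqrt_continuous.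
near=> i; rewrite is_norm_ge0 //=.
by apply: is_norm_le_wdot.
Unshelve. all: by end_near.
Qed.

End NormBound.

Definition total_rate (R : realType) (k : nat) (q : 'I_k -> model k -> R) :=
  \sum_m \sum_i q i m.

Section BirthDeathChain.
Variables (R : realType) (k : nat) (q : 'I_k -> model k -> R) (pi : {ffun model k -> R}) (g : R).
Hypotheses (q_ge0 : forall i m, 0 <= q i m) (pi_gt0 : forall m, 0 < pi m)
           (pi_sum1 : \sum_m pi m = 1) (piQ0 : forall m', \sum_m pi m * rateQ q m m' = 0)
           (g_gt0 : 0 < g)
           (Q_gap : forall x : {ffun model k -> R}, \sum_m x m = 0 ->
              wdot pi x (vmul x (rateQ q)) <= - g * wdot pi x x).

Lemma step_wdot_le (eps : R) mu : 0 < eps <= 1 -> (forall i m, eps * q i m <= 1) ->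
  total_rate q ^+ 2 * (#|model k|%:R * \sum_m (pi m)^-1) * (1 + g) * eps <= g / 2 ->
  is_distribution mu ->
  wdot pi (step q eps mu - pi) (step q eps mu - pi)
    <= (1 - g / 2 * eps) * wdot pi (mu - pi) (mu - pi)
       + total_rate q ^+ 4 * (\sum_m (pi m)^-1) * (1 + g^-1) * eps ^+ 3.
Proof.
move=> eps01 eps_q_le1 small [mu_ge0 mu_sum1]; have /andP[eps_gt0 _] := eps01.
have eps_q01 i m : 0 <= eps * q i m <= 1 by rewrite eps_q_le1 andbT mulr_ge0 ?q_ge0 ?ltW.
have row_le m : \sum_i q i m <= total_rate q.
  by rewrite /total_rate (bigD1 m) //= lerDl !sumr_ge0 // => ? _; rewrite sumr_ge0.
have piQ : vmul pi (rateQ q) = 0 by apply/ffunP => m'; rewrite !ffunE piQ0.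
apply: (wdot_step_le pi_gt0 pi_sum1 g_gt0 Q_gap (fun m m' => rateQ_le q_ge0 m m' row_le) piQ) => //.
move=> m m'; apply: le_trans (Peps_err_le eps_q01 m m') _.
have sum_ge0 : 0 <= eps * \sum_i q i m by rewrite mulr_ge0 ?sumr_ge0 ?ltW.
have sum_le : eps * \sum_i q i m <= eps * total_rate q := ler_wpM2l (ltW eps_gt0) (row_le m).
by rewrite !expr2 ler_pM.
Qed.

End BirthDeathChain.

Theorem theorem3p2 (R : realType) (k : nat) (q : 'I_k -> model k -> R)
  (pi : {ffun model k -> R}) (eps : nat -> R) (mu0 : {ffun model k -> R})
  (N : {ffun model k -> R} -> R) :
  (forall i m, 0 <= q i m) ->
  irreducible q ->
  stationary q pi ->
  reversible q pi ->
  (forall m, 0 < pi m) ->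
  (forall s, (1 <= s)%N -> 0 < eps s) ->
  (forall s i m, (1 <= s)%N -> eps s * q i m <= 1) ->
  eps @ \oo --> 0 ->
  (fun n => \sum_(1 <= s < n.+1) eps s) @ \oo --> +oo ->
  is_distribution mu0 ->
  is_norm N ->
  (fun s => N (mu_iter q eps mu0 s - pi)) @ \oo --> 0.
Proof.
move=> q_ge0 irr [[_ pi_sum1] piQ0] rev pi_gt0 eps_gt0 eps_q_le1 eps_cvg0 eps_sum mu0_d N_norm.
have mu_d := mu_iter_distribution q_ge0 (fun s s_ge1 => ltW (eps_gt0 s s_ge1)) eps_q_le1 mu0_d.
have [g g_gt0 gap] := spectral_gap (rateQ_ge0 q_ge0) (rateQ_row0 q) rev
  (irreducible_connect irr) pi_gt0 pi_sum1.
apply: (is_norm_cvg0 N_norm pi_gt0 (pi_le1 pi_gt0 pi_sum1)).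
have inv_ge0 : 0 <= \sum_m (pi m)^-1 by rewrite sumr_ge0 // => m _; rewrite invr_ge0 ltW.
set K := total_rate q ^+ 4 * (\sum_m (pi m)^-1) * (1 + g^-1).
set C := total_rate q ^+ 2 * (#|model k|%:R * \sum_m (pi m)^-1) * (1 + g).
have epsS : (fun s => eps s.+1) @ \oo --> 0 := cvg_comp _ _ (cvg_addnl 1) eps_cvg0.
have C_epsS : (fun s => C * eps s.+1) @ \oo --> 0.
  by rewrite -(mulr0 C); apply: cvgM => //; exact: cvg_cst.
apply: (recursive_ineq_cvg0 _ eps_sum (c := g / 2) (K := K)) => //.
- by move=> s; apply: wdot_ge0.
- by rewrite divr_gt0.
- apply: mulr_ge0; last by rewrite addr_ge0 // invr_ge0 ltW.
  by rewrite mulr_ge0 // exprn_even_ge0.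
- by move=> s; rewrite ltW ?eps_gt0.
near=> s; apply: step_wdot_le => //.
- by rewrite eps_gt0 //=; near: s; apply: cvgr_le epsS _ _; rewrite ltr01.
- by move=> i m; rewrite eps_q_le1.
- by near: s; apply: cvgr_le C_epsS _ _; rewrite divr_gt0.
Unshelve. all: by end_near.
Qed.
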